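(* Let $d\in\mathbb{N}$. There exists a constant $\Lambda=\Lambda(d)>0$ such that the following holds. Let $\mu,\nu$ be Borel probability measures on $[0,1]^{d}$, let $n\in\mathbb{N}$, let $\mathcal{T}$ be a finite $\mu$-partition of $[0,1]^{d}$, let $c>1$, and let $$X\subseteq \tfrac{1}{cn}\mathbb{Z}^{d}\cap\bigcup\mathcal{T},\qquad Y\subseteq \tfrac{1}{n}\mathbb{Z}^{d}\cap[0,1]^{d}$$ be finite sets such that $$\mu(T)\geq \frac{1}{n^{d}}|X\cap T|\quad\text{for every }T\in\mathcal{T},$$ and $$\nu(E)\leq \frac{1}{n^{d}}\left|\left\{y\in Y\colon d_{\infty}(y,E)\leq \tfrac{1}{n}\right\}\right|\quad\text{for every $\nu$-measurable }E\subseteq[0,1]^{d},$$ where $d_{\infty}$ is the distance induced by $\|\cdot\|_{\infty}$. Let $f\colon[0,1]^{d}\to[0,1]^{d}$ be a Lipschitz mapping with $f_{\sharp}\mu=\nu$. Then there exists an injective mapping $g\colon X\to Y$ with $$\operatorname{Lip}(g)\leq \Lambda\max\{1,\operatorname{Lip}(f)\}\,c\left(n\cdot\max_{T\in\mathcal{T}}\operatorname{diam}T+1\right).$$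
   Context: Given a measure $\mu$ on $[0,1]^{d}$, a collection $\mathcal{T}$ of subsets of $[0,1]^{d}$ is a $\mu$-partition of $[0,1]^{d}$ if $\mu([0,1]^{d}\setminus\bigcup\mathcal{T})=0$ and $\mu(T\cap T')=0$ for all distinct $T,T'\in\mathcal{T}$. $f_\sharp\mu$ denotes the pushforward measure. Lipschitz constants and diameters are with respect to the Euclidean metric. *)

From HB Require Import structures.
From mathcomp Require Import all_boot all_order all_algebra.
From mathcomp Require Import finmap.
From mathcomp Require Import all_classical all_reals all_analysis.
Unset Printing Implicit Defensive.
Import Order.TTheory GRing.Theory Num.Theory numFieldNormedType.Exports.
Local Open Scope classical_set_scope.
Local Open Scope ring_scope.

Section Defs.
Variables (R : realType) (d : nat).
Local Notation V := 'rV[R]_d.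

Definition enorm (x : V) : R := Num.sqrt (\sum_(i < d) (x ord0 i) ^+ 2).

Definition dinf (x y : V) : R := \big[Num.max/0]_(i < d) `|x ord0 i - y ord0 i|.

(* d_oo distance from a point to a set (+oo for the empty set) *)
Definition dinf_set (x : V) (E : set V) : \bar R :=
  ereal_inf [set (dinf x e)%:E | e in E].

Definition cube : set V := [set x | forall i, 0 <= x ord0 i <= 1].

Definition lattice (h : R) : set V :=
  [set x | forall i, exists z : int, x ord0 i = z%:~R * h].

(* Euclidean diameter (0 for the empty set) *)
Definition diam (A : set V) : R :=
  sup [set enorm (p.1 - p.2) | p in [set p : V * V | A p.1 /\ A p.2]].

Definition lip (A : set V) (f : V -> V) : R :=
  sup [set enorm (f p.1 - f p.2) / enorm (p.1 - p.2)
      | p in [set p : V * V | A p.1 /\ A p.2 /\ p.1 <> p.2]].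

Definition is_lipschitz_on (A : set V) (f : V -> V) : Prop :=
  exists L : R, forall x y, A x -> A y -> enorm (f x - f y) <= L * enorm (x - y).

Definition borelV := g_sigma_algebraType (@open V).

End Defs.

Arguments enorm {R d}.
Arguments dinf {R d}.
Arguments dinf_set {R d}.
Arguments lattice {R d}.
Arguments diam {R d}.
Arguments lip {R d}.
Arguments is_lipschitz_on {R d}.

From HB Require Import structures.
From mathcomp Require Import all_boot all_order all_algebra.
From mathcomp Require Import finmap.
From mathcomp Require Import all_classical all_reals all_analysis.
From mathcomp Require Import zify ring lra.
Import Order.TTheory GRing.Theory Num.Theory numFieldNormedType.Exports.

(* Let D bound the diameters of the cells.  For S a subset of X, the cells
   meeting S have mu-mass at least |S|/n^d and f maps them into the
   Lip(f) D-neighbourhood E of f(S) (in the sup norm), so nu(E) >= |S|/n^d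
   and the hypothesis on nu yields |S| points of Y within 1/n of E.  By
   Hall's marriage theorem every x in X can thus be matched injectively to
   some g(x) in Y with |g(x) - f(x)| <= Lip(f) D + 2/n.  As X is
   1/(cn)-separated, a map at bounded distance from the Lipschitz map f is
   Lipschitz on X, with constant O(c max(1, Lip f) (nD + 1)). *)

(** * Hall's marriage theorem *)

Section Hall.
Context {A B : finType}.
Implicit Types (N : A -> {set B}) (X S : {set A}).

Definition hall_condition N X :=
  forall S, S \subset X -> #|S| <= #|\bigcup_(a in S) N a|.

Definition matching N X (h : A -> B) :=
  {in X, forall a, h a \in N a} /\ {in X &, injective h}.

Lemma hall_condition_sub {N X S} : S \subset X -> hall_condition N X -> hall_condition N S.
Proof. by move=> SX hX S' S'S; apply/hX/(fintype.subset_trans S'S). Qed.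

Lemma bigcup_setD N S (C : {set B}) :
  \bigcup_(a in S) (N a :\: C) = (\bigcup_(a in S) N a) :\: C.
Proof.
apply/setP => b; rewrite inE; apply/bigcupP/andP => [[a aS]|[bC /bigcupP[a aS bN]]].
  by rewrite inE => /andP[bC bN]; split=> //; apply/bigcupP; exists a.
by exists a; rewrite // inE bC.
Qed.

Lemma matching_setU N X1 X2 (C : {set B}) h1 h2 :
  matching (fun a => N a :&: C) X1 h1 -> matching (fun a => N a :\: C) X2 h2 ->
  matching N (X1 :|: X2) (fun a => if a \in X1 then h1 a else h2 a).
Proof.
move=> [h1N h1inj] [h2N h2inj].
have h1P a : a \in X1 -> h1 a \in N a /\ h1 a \in C.
  by move/h1N; rewrite inE => /andP[].
have h2P a : a \in X1 :|: X2 -> a \notin X1 -> h2 a \in N a /\ h2 a \notin C.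
  rewrite inE => /orP[->//|/h2N]; rewrite inE => /andP[].
  by move=> b1 b2 _; split.
split=> [a aX|a a' aX a'X].
  by case: ifPn => a1; [case: (h1P a a1)|case: (h2P a aX a1)].
case: ifPn => a1; case: ifPn => a'1.
- exact: h1inj.
- by move=> e; have [_] := h2P a' a'X a'1; rewrite -e; case: (h1P a a1) => _ ->.
- by move=> e; have [_] := h2P a aX a1; rewrite e; case: (h1P a' a'1) => _ ->.
- move: aX a'X; rewrite !inE (negbTE a1) (negbTE a'1) /=.
  exact: h2inj.
Qed.

Lemma hall_condition_tight {N X S0} :
  hall_condition N X -> S0 \subset X -> #|\bigcup_(a in S0) N a| <= #|S0| ->
  hall_condition (fun a => N a :\: \bigcup_(a in S0) N a) (X :\: S0).
Proof.
move=> hX S0X tight S SXS0; rewrite bigcup_setD.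
have SX : S \subset X := fintype.subset_trans SXS0 (subsetDl X S0).
have SS0 : [disjoint S & S0].
  by rewrite finset.disjoints_subset (fintype.subset_trans SXS0) // finset.setDE subsetIr.
have := hX (S :|: S0); rewrite finset.subUset SX S0X finset.bigcup_setU => /(_ isT).
rewrite cardsU (disjoint_setI0 SS0) cards0 cardsU cardsD.
have := subset_leq_card (subsetIl (\bigcup_(a in S) N a) (\bigcup_(a in S0) N a)).
by lia.
Qed.

Lemma hall_condition_loose {N X x} y :
  hall_condition N X -> x \in X ->
  (forall S, S \subset X -> 0 < #|S| -> S != X -> #|S| < #|\bigcup_(a in S) N a|) ->
  hall_condition (fun a => N a :\ y) (X :\ x).
Proof.
move=> hX xX loose S SXx; rewrite bigcup_setD.
have [->|S0] := posnP #|S|; first by [].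
have SX : S \subset X := fintype.subset_trans SXx (subsetDl X [set x]).
have SnX : S != X.
  apply: contraTneq SXx => ->; apply/fintype.subsetPn; exists x => //.
  by rewrite !inE eqxx.
have := loose S SX S0 SnX; rewrite cardsD.
have := subset_leq_card (subsetIr (\bigcup_(a in S) N a) [set y]); rewrite cards1.
by lia.
Qed.

(* Halmos-Vaughan induction: if some nonempty proper S0 is tight, match S0 inside
   its neighbourhood and X :\: S0 outside it; otherwise remove any edge x-y. *)
Theorem hall_marriage (b0 : B) N X : hall_condition N X -> exists h, matching N X h.
Proof.
have [n] := ubnP #|X|; elim: n X N => // n IH X N /ltnSE leXn hX.
have [S0 /and4P[S0X S0n0 S0nX tight]|loose] := pickP [pred S : {set A} |
    [&& S \subset X, 0 < #|S|, S != X & #|\bigcup_(a in S) N a| <= #|S|]].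
  have ltS0 : #|S0| < #|X| by apply: proper_card; rewrite finset.properEneq S0nX.
  have [h1 [h1N h1inj]] := IH S0 N (leq_trans ltS0 leXn) (hall_condition_sub S0X hX).
  have ltXS0 : #|X :\: S0| < #|X| by rewrite cardsDS //; lia.
  have [h2 h2M] := IH (X :\: S0) (fun a => N a :\: \bigcup_(a in S0) N a)
    (leq_trans ltXS0 leXn) (hall_condition_tight hX S0X tight).
  exists (fun a => if a \in S0 then h1 a else h2 a).
  rewrite -(setID X S0) (finset.setIidPr S0X); apply: matching_setU h2M.
  split=> // a aS0.
  by rewrite inE h1N //; apply/bigcupP; exists a => //; apply: h1N.
have [/cards0_eq->|] := posnP #|X|; first by exists (fun=> b0); split=> a; rewrite inE.
rewrite card_gt0 => /set0Pn[x xX].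
have : 0 < #|N x| by have := hX [set x]; rewrite finset.sub1set xX big_set1 cards1; exact.
rewrite card_gt0 => /set0Pn[y yN].
have ltXx : #|X :\ x| < #|X| by rewrite (cardsD1 x X) xX.
have hXx : hall_condition (fun a => N a :\ y) (X :\ x).
  apply: hall_condition_loose hX xX _ => S SX S0 SnX.
  by have /negbT := loose S; rewrite /= SX S0 SnX ltnNge.
have [h2 h2M] := IH _ _ (leq_trans ltXx leXn) hXx.
exists (fun a => if a \in [set x] then y else h2 a).
rewrite -(finset.setD1K xX); apply: (matching_setU _ _ _ _ (fun=> y)) h2M.
by split=> [a /set1P->|a a' /set1P-> /set1P->]; rewrite // !inE yN eqxx.
Qed.

Corollary hall_marriage_setT N :
  (forall S, #|S| <= #|\bigcup_(a in S) N a|) ->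
  exists h : A -> B, (forall a, h a \in N a) /\ injective h.
Proof.
move=> hN; have hT : hall_condition N [set: A] by move=> S _; apply: hN.
case: (pickP A) => [a0 _|A0].
  have : 0 < #|N a0| by have := hN [set a0]; rewrite big_set1 cards1.
  rewrite card_gt0 => /set0Pn[b0 _]; have [h [hT1 hT2]] := hall_marriage b0 N _ hT.
  by exists h; split=> [a|a a']; [apply: hT1|apply: hT2]; rewrite inE.
by exists (fun a => False_rect _ (Bool.diff_true_false (A0 a))); split=> a; have := A0 a.
Qed.
End Hall.

Lemma card_bigcup_le {A : finType} {I : Type} (r : seq I) (G : I -> {set A}) :
  #|\bigcup_(i <- r) G i| <= \sum_(i <- r) #|G i|.
Proof.
elim/big_ind2: _ => [|m U k V hU hV|//]; first by rewrite cards0.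
exact: leq_trans (leq_card_setU U V).1 (leq_add hU hV).
Qed.

Lemma card_fset_sep (K : choiceType) (Z : {fset K}) (P : pred K) :
  #|[set a : Z | P (val a)]| = #|` [fset x in Z | P x]%fset|.
Proof.
rewrite -(@card_fsub _ Z); last by apply/fsubsetP => x; rewrite !inE => /andP[].
by apply: eq_card => a; rewrite in_fsub !inE (fsvalP a).
Qed.

Lemma fset_injection {K : choiceType} {X Y : {fset K}} (h : X -> Y) : injective h ->
  exists g : K -> K,
    [/\ {in X, forall x, g x \in Y}, {in X &, injective g} &
        forall a : X, g (val a) = val (h a)].
Proof.
move=> h_inj; pose g x := if insub x is Some a then val (h a) else x.
have gE a : g (val a) = val (h a) by rewrite /g valK.
exists g; split=> // [x xX|x x' xX x'X]; first by rewrite -[x]/(val [` xX]%fset) gE fsvalP.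
by rewrite -[x]/(val [` xX]%fset) -[x']/(val [` x'X]%fset) !gE => /val_inj/h_inj->.
Qed.

Local Open Scope classical_set_scope.
Local Open Scope ring_scope.

Lemma ge_sup_ge0 (R : realType) (E : set R) x : 0 <= x -> ubound E x -> sup E <= x.
Proof.
move=> x0 Ex; have [->|/set0P E0] := eqVneq E set0; first by rewrite sup0.
exact: ge_sup.
Qed.

Lemma sup_ge0 (R : realType) (E : set R) : (forall x, E x -> 0 <= x) -> 0 <= sup E.
Proof.
move=> E0; have [[[x Ex] hE]|/sup_out->//] := pselect (has_sup E).
exact: le_trans (E0 x Ex) (ub_le_sup hE Ex).
Qed.

Section sup_norm.
Context {R : realType} {d : nat}.
Local Notation V := 'rV[R]_d.

Lemma normr_coord_le (v : V) i : `|v ord0 i| <= `|v|.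
Proof. by rewrite [leRHS]/Num.norm /= mx_normrE; apply: (le_bigmax _ _ (ord0, i)). Qed.

Lemma normr_le_coord (v : V) m : 0 <= m -> (forall i, `|v ord0 i| <= m) -> `|v| <= m.
Proof.
move=> m0 vm; rewrite [leLHS]/Num.norm /= mx_normrE.
by apply: bigmax_le => // -[i j] _; rewrite [i]ord1.
Qed.

Lemma dinfE (x y : V) : dinf x y = `|x - y|.
Proof.
apply/le_anti/andP; split.
  by apply: bigmax_le => // i _; have := normr_coord_le (x - y) i; rewrite !mxE.
apply: normr_le_coord => [|i]; first exact: bigmax_ge_id.
by rewrite !mxE /dinf; apply: (le_bigmax 0 (fun j : 'I_d => `|x ord0 j - y ord0 j|)).
Qed.

Lemma lattice_sep (h : R) (x y : V) :
  0 < h -> lattice h x -> lattice h y -> x != y -> h <= `|x - y|.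
Proof.
move=> h0 hx hy xy; have [i xyi] : exists i, x ord0 i != y ord0 i.
  apply/existsP; apply: contraNT xy => /existsPn xy.
  by apply/eqP/rowP => i; apply/eqP; rewrite -[_ == _]negbK xy.
apply: le_trans (normr_coord_le _ i); rewrite !mxE.
move: xyi; have [z1 ->] := hx i; have [z2 ->] := hy i => z12.
rewrite -mulrBl normrM (gtr0_norm h0) ler_peMl ?(ltW h0) // -intrB.
apply: norm_intr_ge1; first exact: intr_int.
by rewrite intr_eq0 subr_eq0; apply: contraNneq z12 => ->.
Qed.

Lemma enorm_ge0 (v : V) : 0 <= enorm v.
Proof. exact: sqrtr_ge0. Qed.

Lemma normr_le_enorm (v : V) : `|v| <= enorm v.
Proof.
apply: normr_le_coord => [|i]; first exact: enorm_ge0.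
rewrite /enorm -sqrtr_sqr ler_sqrt; last by apply: sumr_ge0 => j _; exact: sqr_ge0.
by rewrite (bigD1 i) //= lerDl; apply: sumr_ge0 => j _; exact: sqr_ge0.
Qed.

Lemma enorm_gt0 (v : V) : v != 0 -> 0 < enorm v.
Proof. by move=> v0; apply: lt_le_trans (normr_le_enorm v); rewrite normr_gt0. Qed.

Lemma enorm_le_normr (v : V) : enorm v <= d%:R * `|v|.
Proof.
have dv0 : 0 <= d%:R * `|v| by rewrite mulr_ge0.
rewrite /enorm -(ger0_norm dv0) -sqrtr_sqr ler_sqrt ?sqr_ge0 //.
apply: (@le_trans _ _ (\sum_(i < d) `|v| ^+ 2)).
  apply: ler_sum => i _; rewrite -real_normK ?num_real //.
  by rewrite lerXn2r ?nnegrE ?normr_ge0 ?normr_coord_le.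
rewrite sumr_const card_ord -[leLHS]mulr_natl exprMn ler_wpM2r ?sqr_ge0 //.
by rewrite -natrX ler_nat; nia.
Qed.

Lemma cube_dist_le1 (x y : V) : cube R d x -> cube R d y -> `|x - y| <= 1.
Proof.
move=> cx cy; apply: normr_le_coord => // i; rewrite !mxE.
have /andP[? ?] := cx i; have /andP[? ?] := cy i.
by rewrite ler_norml; apply/andP; split; lra.
Qed.
End sup_norm.

Section lipschitz_diam.
Context {R : realType} {d : nat}.
Local Notation V := 'rV[R]_d.
Implicit Types (A : set V) (f : V -> V).

Lemma lip_ge0 A f : 0 <= lip A f.
Proof. by apply: sup_ge0 => _ [p _ <-]; apply: divr_ge0; apply: enorm_ge0. Qed.

Lemma lip_le {A f x y} : is_lipschitz_on A f -> A x -> A y ->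
  enorm (f x - f y) <= lip A f * enorm (x - y).
Proof.
move=> [L fL] Ax Ay; have [<-|xy] := eqVneq x y.
  by rewrite !subrr /enorm big1 ?sqrtr0 ?mulr0 // => i _; rewrite mxE expr0n.
have xy0 : 0 < enorm (x - y) by apply: enorm_gt0; rewrite subr_eq0.
rewrite -ler_pdivrMr //; apply: ub_le_sup; last by exists (x, y); do 2?split=> //; apply/eqP.
exists L => _ [[u w] /= [Au [Aw uw]] <-].
by rewrite ler_pdivrMr ?fL // enorm_gt0 // subr_eq0; apply/eqP.
Qed.

Lemma cube_enorm_le (x y : V) : cube R d x -> cube R d y -> enorm (x - y) <= d%:R.
Proof.
move=> cx cy; apply: le_trans (enorm_le_normr _) _.
by rewrite ler_piMr // cube_dist_le1.
Qed.

Lemma diam_ge0 A : 0 <= diam A.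
Proof. by apply: sup_ge0 => _ [p _ <-]; apply: enorm_ge0. Qed.

Lemma enorm_le_diam {A x y} : A `<=` cube R d -> A x -> A y -> enorm (x - y) <= diam A.
Proof.
move=> Ac Ax Ay; apply: ub_le_sup; last by exists (x, y).
by exists d%:R => _ [p [A1 A2] <-]; apply: cube_enorm_le; apply: Ac.
Qed.

Lemma diam_le_dim A : A `<=` cube R d -> diam A <= d%:R.
Proof.
by move=> Ac; apply: ge_sup_ge0 => // _ [p [A1 A2] <-]; apply: cube_enorm_le; apply: Ac.
Qed.

Lemma normr_le_lip_diam {f T z a} : is_lipschitz_on (cube R d) f -> T `<=` cube R d ->
  T z -> T a -> `|f z - f a| <= lip (cube R d) f * diam T.
Proof.
move=> fL Tc Tz Ta; apply: le_trans (normr_le_enorm _) _.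
apply: le_trans (lip_le fL (Tc _ Tz) (Tc _ Ta)) _.
by rewrite ler_wpM2l ?lip_ge0 // enorm_le_diam.
Qed.
End lipschitz_diam.

Lemma closed_setI_preimage {T U : topologicalType} (A : set T) (B : set U) (f : T -> U) :
  closed A -> {within A, continuous f} -> closed B -> closed (A `&` f @^-1` B).
Proof.
by move=> cA fA cB; rewrite setIC closed_setIS //; apply: (continuous_closedP _).1.
Qed.

Lemma lipschitz_within_continuous {R : realFieldType} {V W : normedModType R}
    (A : set V) (f : V -> W) (k : R) :
  (forall x y, A x -> A y -> `|f x - f y| <= k * `|x - y|) -> {within A, continuous f}.
Proof.
move=> fk; apply/subspace_continuousP => x Ax; apply/cvgrPdist_le => e e0.
have k1 : 0 < `|k| + 1 by rewrite ltr_wpDl.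
rewrite near_withinE; near=> y => Ay; apply: le_trans (fk x y Ax Ay) _.
apply: le_trans (_ : _ <= (`|k| + 1) * `|x - y|) _.
  by rewrite ler_wpM2r // (le_trans (ler_norm k)) // lerDl.
rewrite -ler_pdivlMl //; near: y; apply: cvgr_dist_le; first exact: cvg_id.
by rewrite mulr_gt0 ?invr_gt0.
Unshelve. all: by end_near.
Qed.

Lemma is_lipschitz_on_continuous {R : realType} {d : nat} {A : set 'rV[R]_d} {f} :
  is_lipschitz_on A f -> {within A, continuous f}.
Proof.
move=> fL; apply: (@lipschitz_within_continuous _ _ _ _ _ (lip A f * d%:R)) => x y Ax Ay.
apply: le_trans (normr_le_enorm _) _; apply: le_trans (lip_le fL Ax Ay) _.
by rewrite -mulrA ler_wpM2l ?lip_ge0 // enorm_le_normr.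
Qed.

Section cube.
Context {R : realType} {d : nat}.
Local Notation V := 'rV[R]_d.

Lemma cube_closed : closed (cube R d).
Proof.
have -> : cube R d = \bigcap_(i in [set: 'I_d]) ((fun v : V => v ord0 i) @^-1` `[0, 1]).
  apply/seteqP; split=> v vc i; first by move=> _ /=; rewrite in_itv vc.
  by have /= := vc i I; rewrite in_itv.
apply: closed_bigI => i _; apply: preimage_closed; last exact: itv_closed.
by move=> v _; apply: coord_continuous.
Qed.

Lemma closed_borelV_measurable (A : set V) : closed A -> @measurable _ (borelV R d) A.
Proof.
move=> cA; rewrite -[A]setCK; apply: measurableC; apply: sub_sigma_algebra.
exact: closed_openC.
Qed.
End cube.

Lemma dinf_set_witness {R : realType} {d : nat} (y : 'rV[R]_d) (E : set 'rV[R]_d)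
    (t t' : R) :
  (dinf_set y E <= t%:E)%E -> t < t' -> exists2 w, E w & `|y - w| < t'.
Proof.
move=> yE tt'; have /ereal_inf_lt[_ [w Ew <-]] : (dinf_set y E < t'%:E)%E.
  by apply: le_lt_trans yE _; rewrite lte_fin.
by rewrite lte_fin dinfE; exists w.
Qed.

(** * Measure of a union of almost disjoint sets *)

Section almost_disjoint.
Context {d} {T : measurableType d} {R : realType} (mu : {measure set T -> \bar R}).
Context {I : choiceType} {A : {fset I}} {F : I -> set T}.
Hypothesis mF : forall i, i \in A -> measurable (F i).
Hypothesis F_null : forall i j, i \in A -> j \in A -> i != j -> mu (F i `&` F j) = 0%E.

(* Trimming each F i by the other sets loses only a null set, and the trimmed
   sets are pairwise disjoint. *)
Let others i := \big[setU/set0]_(j <- A | j != i) F j.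

Let others_measurable i : measurable (others i).
Proof. by rewrite /others big_seq_cond; apply: bigsetU_measurable => j /andP[/mF]. Qed.

Let measure_others i : i \in A -> mu (F i) = mu (F i `\` others i).
Proof.
move=> iA; rewrite (measureDI mu (mF _ iA) (others_measurable i)).
rewrite -[RHS]adde0; congr (_ + _)%E.
rewrite /others big_distrr /= big_seq_cond.
pose P U := measurable U /\ mu U = 0%E.
suff [] : P (\big[setU/set0]_(j <- A | (j \in A) && (j != i)) (F i `&` F j)) by [].
elim/big_rec: _ => [|j U /andP[jA ji] [mU U0]].
  by split; [exact: measurable0|exact: measure0].
have mFij : measurable (F i `&` F j) by apply: measurableI; apply: mF.
split; first exact: measurableU.
by apply: null_set_setU => //; apply: F_null; rewrite // eq_sym.
Qed.

Lemma fsum_le_measure_bigsetU :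
  (\sum_(i <- A) mu (F i) <= mu (\big[setU/set0]_(i <- A) F i))%E.
Proof.
have mG i : i \in A -> measurable (F i `\` others i).
  by move=> iA; apply: measurableD; [apply: mF|apply: others_measurable].
rewrite big_seq (eq_bigr _ measure_others) -big_seq -measure_fbigsetU //.
  apply: le_measure; rewrite ?inE.
  - by rewrite big_seq; apply: bigsetU_measurable => i /mG.
  - by rewrite big_seq; apply: bigsetU_measurable => i /mF.
  - by rewrite -!bigcup_seq => x [i iA [Fix _]]; exists i.
move=> i j iA jA [x [[Fix _] [_ Ojx]]]; apply: contra_notP Ojx => /eqP ij.
by rewrite /others -bigcup_seq_cond; exists i; rewrite //= iA.
Qed.
End almost_disjoint.

(** * The Hall condition *)

Definition nearby {R : realType} {d : nat} (Y : {fset 'rV[R]_d}) (r : R)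
  (y0 : 'rV[R]_d) : {set Y} := [set b : Y | `|val b - y0| <= r]%SET.

Section matching_condition.
Context {R : realType} {d : nat}.
Local Notation V := 'rV[R]_d.
Local Notation measurable := (@measurable _ (borelV R d)).
Context {mu nu : {measure set (borelV R d) -> \bar R}} {n : nat} {cells : {fset set V}}.
Context {X Y : {fset V}} {f : V -> V} {rho : R}.
Hypothesis n_gt0 : (0 < n)%N.
Hypothesis cellsP : forall T, T \in cells -> measurable T /\ T `<=` cube R d.
Hypothesis cells_null : forall T T', T \in cells -> T' \in cells -> T <> T' ->
  mu (T `&` T') = 0%E.
Hypothesis X_covered : forall x, x \in X -> exists2 T, T \in cells & T x.
Hypothesis mu_cells : forall T, T \in cells ->
  (((n%:R ^+ d)^-1 * (#|` [fset x in X | x \in T]|)%fset%:R)%:E <= mu T)%E.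
Hypothesis nu_nbhd : forall E, measurable E -> E `<=` cube R d ->
  (nu E <= ((n%:R ^+ d)^-1 *
    (#|` [fset y in Y | (dinf_set y E <= (n%:R^-1)%:E)%E]|)%fset%:R)%:E)%E.
Hypothesis f_cube : forall x, cube R d x -> cube R d (f x).
Hypothesis f_continuous : {within cube R d, continuous f}.
Hypothesis pushforward : forall B, measurable B -> nu B = mu (cube R d `&` f @^-1` B).
Hypothesis f_cells : forall T z a, T \in cells -> T z -> T a -> `|f z - f a| <= rho.

(* The set E of the proof idea. *)
Let thick_image (S : {set X}) : set V :=
  cube R d `&` \bigcup_(a in [set` S]) closed_ball_ Num.norm (f (val a)) rho.

Let thick_image_closed (S : {set X}) : closed (thick_image S).
Proof.
apply: closedI; first exact: cube_closed.
by apply: closed_bigcup => // a _; apply: closed_closed_ball_.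
Qed.

Let card_le_measure_preimage (S : {set X}) :
  (((n%:R ^+ d)^-1 * #|S|%:R)%:E <= mu (cube R d `&` f @^-1` thick_image S))%E.
Proof.
pose F := [fset T in cells | `[< exists2 a, a \in S & T (val a) >]]%fset.
have FP T : T \in F -> T \in cells /\ exists2 a, a \in S & T (val a).
  by rewrite !inE => /andP[Tc /asboolP].
have cover : (#|S| <= \sum_(T <- F) #|` [fset x in X | x \in T]%fset|)%N.
  under eq_bigr => T _ do rewrite -card_fset_sep.
  apply: leq_trans _ (card_bigcup_le _ _); apply/subset_leq_card/fintype.subsetP => a aS.
  have [T Tc Ta] := X_covered _ (fsvalP a).
  have TF : T \in F by rewrite !inE Tc; apply/asboolP; exists a.
  by rewrite (big_rem T TF) /= !inE mem_set.
apply: (@le_trans _ _ (\sum_(T <- F) mu T)%E).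
  apply: le_trans (_ : _ <= ((n%:R ^+ d)^-1 *
      (\sum_(T <- F) #|` [fset x in X | x \in T]%fset|)%:R)%:E)%E _.
    by rewrite lee_fin ler_wpM2l ?invr_ge0 ?exprn_ge0 // ler_nat.
  rewrite natr_sum mulr_sumr -sumEFin big_seq [leRHS]big_seq.
  by apply: lee_sum => T /FP[Tc _]; apply: mu_cells.
apply: le_trans (fsum_le_measure_bigsetU mu (F := id) _ _) _.
- by move=> T /FP[/cellsP[]].
- by move=> T T' /FP[Tc _] /FP[T'c _] /eqP; apply: cells_null.
apply: le_measure; rewrite ?inE.
- by rewrite big_seq; apply: bigsetU_measurable => T /FP[/cellsP[]].
- apply: closed_borelV_measurable.
  exact: closed_setI_preimage cube_closed f_continuous (thick_image_closed S).
rewrite -bigcup_seq => z [T /FP[Tc [a aS Ta]] Tz].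
have cz := (cellsP _ Tc).2 _ Tz.
split=> //; split; first exact: f_cube.
by exists a => //; apply: f_cells Tc Ta Tz.
Qed.

Let nu_thick_image_le (S : {set X}) :
  (nu (thick_image S) <= ((n%:R ^+ d)^-1 *
    #|(\bigcup_(a in S) nearby Y (rho + 2 / n%:R) (f (val a)))%SET|%:R)%:E)%E.
Proof.
have thick_cube : thick_image S `<=` cube R d by apply: subIsetl.
have thick_meas := closed_borelV_measurable _ (thick_image_closed S).
apply: le_trans (nu_nbhd _ thick_meas thick_cube) _.
rewrite lee_fin ler_wpM2l ?invr_ge0 ?exprn_ge0 // ler_nat -card_fset_sep.
apply/subset_leq_card/fintype.subsetP => b.
rewrite inE => /(dinf_set_witness _ _ _ (2 / n%:R)).
have n0 : 0 < n%:R :> R by rewrite ltr0n.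
case=> [|w [_ [a aS wa]] bw]; first by rewrite ltr_pdivlMr // mulVf ?gt_eqF // ltr1n.
apply/finset.bigcupP; exists a => //; rewrite /nearby inE.
rewrite -(subrK w (val b)) -addrA; apply: le_trans (ler_normD _ _) _.
by rewrite [rho + _]addrC lerD ?(ltW bw) // distrC.
Qed.

Lemma hall_condition_pushforward (S : {set X}) :
  (#|S| <= #|(\bigcup_(a in S) nearby Y (rho + 2 / n%:R) (f (val a)))%SET|)%N.
Proof.
have := card_le_measure_preimage S.
rewrite -pushforward; last exact: closed_borelV_measurable _ (thick_image_closed S).
move/le_trans/(_ (nu_thick_image_le S)).
by rewrite lee_fin ler_pM2l ?ler_nat // invr_gt0 exprn_gt0 // ltr0n.
Qed.
End matching_condition.

(** * Lipschitz bound for the matching *)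

Lemma lip_le_near_lipschitz {R : realType} {d : nat} {A : set 'rV[R]_d}
    {f g : 'rV[R]_d -> 'rV[R]_d} {L r delta : R} :
  0 < delta -> 0 <= r -> 0 <= L ->
  (forall x y, A x -> A y -> x != y -> delta <= `|x - y|) ->
  (forall x, A x -> `|g x - f x| <= r) ->
  (forall x y, A x -> A y -> enorm (f x - f y) <= L * enorm (x - y)) ->
  lip A g <= d%:R * (2 * r / delta + L).
Proof.
move=> delta0 r0 L0 Asep gf fL.
have C0 : 0 <= 2 * r / delta + L.
  by apply: addr_ge0 => //; apply: divr_ge0; [apply: mulr_ge0|apply: ltW].
apply: ge_sup_ge0 => [|_ [[x y] /= [Ax [Ay xy]] <-]]; first by rewrite mulr_ge0.
have sep : delta <= `|x - y| by apply: Asep => //; apply/eqP.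
set e := enorm (x - y).
have e_ge : delta <= e := le_trans sep (normr_le_enorm _).
rewrite ler_pdivrMr ?(lt_le_trans delta0) //; apply: le_trans (enorm_le_normr _) _.
rewrite -[_ * _ * e]mulrA ler_wpM2l //.
have gxy : `|g x - g y| <= 2 * r + L * e.
  have -> : 2 * r + L * e = r + (L * e + r) by ring.
  apply: le_trans (ler_distD (f x) _ _) _; apply: lerD; first exact: gf.
  apply: le_trans (ler_distD (f y) _ _) _; rewrite [X in _ + X <= _]distrC.
  by apply: lerD; [apply: le_trans (normr_le_enorm _) (fL x y Ax Ay)|apply: gf].
apply: le_trans gxy _; rewrite [X in _ <= X]mulrDl lerD2r [_ / delta * e]mulrAC.
by rewrite ler_pdivlMr // ler_wpM2l // mulr_ge0.
Qed.

(* The bound of lip_le_near_lipschitz for r = L D + 2/n and delta = 1/(cn). *)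
Lemma near_lipschitz_constant_le {R : realFieldType} (d : nat) {L D c n : R} :
  0 <= L -> 0 <= D -> 1 < c -> 0 < n ->
  d%:R * (2 * (L * D + 2 / n) / (c * n)^-1 + L) <=
    (5 * d.+1)%:R * Num.max 1 L * c * (n * D + 1).
Proof.
move=> L0 D0 c1 n0; set M := Num.max 1 L; set P := n * D.
have M1 : 1 <= M by rewrite /M le_max lexx.
have LM : L <= M by rewrite /M le_max lexx orbT.
have P0 : 0 <= P by rewrite /P mulr_ge0 // ltW.
have -> : 2 * (L * D + 2 / n) / (c * n)^-1 = 2 * c * (L * P + 2).
  by rewrite invrK /P; field; rewrite gt_eqF.
have inner : 2 * c * (L * P + 2) + L <= 5 * (M * c * (P + 1)).
  have LPM : L * P <= M * P by rewrite ler_wpM2r.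
  have cP1 : 1 <= c * (P + 1) by nra.
  have McP : M <= M * c * (P + 1) by rewrite -mulrA ler_peMr // (le_trans _ M1).
  nra.
apply: le_trans (ler_wpM2l (ler0n _ d) inner) _.
have K0 : 0 <= M * c * (P + 1) by apply: mulr_ge0; [apply: mulr_ge0|]; lra.
have -> : (5 * d.+1)%:R * M * c * (P + 1) = (5 * d.+1)%:R * (M * c * (P + 1)) by ring.
by rewrite [_ * (5 * _)]mulrA ler_wpM2r // -natrM ler_nat; lia.
Qed.

Theorem lemma1 (R : realType) (d : nat) :
  exists Lambda : R, 0 < Lambda /\
  forall (mu nu : probability (borelV R d) R) (n : nat)
         (Tc : set (set 'rV[R]_d)) (c : R) (X Y : {fset 'rV[R]_d})
         (f : 'rV[R]_d -> 'rV[R]_d),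
    (0 < n)%N ->
    (* mu, nu are probability measures on [0,1]^d *)
    mu (cube R d) = 1%E -> nu (cube R d) = 1%E ->
    (* Tc is a finite mu-partition of [0,1]^d *)
    finite_set Tc ->
    (forall T, Tc T -> @measurable _ (borelV R d) T /\ T `<=` cube R d) ->
    mu (cube R d `\` \bigcup_(T in Tc) T) = 0%E ->
    (forall T T', Tc T -> Tc T' -> T <> T' -> mu (T `&` T') = 0%E) ->
    1 < c ->
    (forall x, x \in X -> lattice (c * n%:R)^-1 x /\ exists2 T, Tc T & T x) ->
    (forall y, y \in Y -> lattice (n%:R)^-1 y /\ cube R d y) ->
    (forall T, Tc T ->
       (((n%:R ^+ d)^-1 * (#|` [fset x in X | x \in T]|)%fset%:R)%:E <= mu T)%E) ->
    (forall E, @measurable _ (borelV R d) E -> E `<=` cube R d ->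
       (nu E <= ((n%:R ^+ d)^-1 *
          (#|` [fset y in Y | (dinf_set y E <= (n%:R^-1)%:E)%E]|)%fset%:R)%:E)%E) ->
    (* f : [0,1]^d -> [0,1]^d Lipschitz with f_# mu = nu *)
    (forall x, cube R d x -> cube R d (f x)) ->
    is_lipschitz_on (cube R d) f ->
    (forall B, @measurable _ (borelV R d) B ->
       nu B = mu (cube R d `&` f @^-1` B)) ->
    exists g : 'rV[R]_d -> 'rV[R]_d,
      (forall x, x \in X -> g x \in Y) /\
      {in X &, injective g} /\
      lip [set x | x \in X] g <=
        Lambda * Num.max 1 (lip (cube R d) f) * c *
        (n%:R * sup [set diam T | T in Tc] + 1).
Proof.
exists (5 * d.+1)%:R; split=> // mu nu n Tc c X Y f n_gt0 _ _ /finite_fsetP[cells ->].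
move=> cellsP _ cells_null c1 XP _ mu_cells nu_nbhd f_cube f_lip push.
set L := lip (cube R d) f; set D := sup [set diam T | T in [set` cells]].
have L0 : 0 <= L := lip_ge0 _ _.
have D0 : 0 <= D by apply: sup_ge0 => _ [T _ <-]; apply: diam_ge0.
have f_cells T z a : T \in cells -> T z -> T a -> `|f z - f a| <= L * D.
  move=> Tcell Tz Ta; have Tcube := (cellsP T Tcell).2.
  apply: le_trans (normr_le_lip_diam f_lip Tcube Tz Ta) _; rewrite ler_wpM2l //.
  apply: ub_le_sup; last by exists T.
  by exists d%:R => _ [T' /cellsP[_ /diam_le_dim dT'] <-].
have X_cube x : x \in X -> cube R d x.
  by case/XP => _ [T Tcell Tx]; apply: (cellsP T Tcell).2.
have [h [hN h_inj]] := hall_marriage_setT _ (hall_condition_pushforward n_gt0 cellsP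
  cells_null (fun x xX => (XP x xX).2) mu_cells nu_nbhd f_cube
  (is_lipschitz_on_continuous f_lip) push f_cells).
have [g [gY g_inj gE]] := fset_injection h h_inj.
exists g; split=> //; split=> //.
have n0 : 0 < n%:R :> R by rewrite ltr0n.
have cn0 : 0 < (c * n%:R)^-1 by rewrite invr_gt0 mulr_gt0 // (lt_trans _ c1).
apply: le_trans (near_lipschitz_constant_le d L0 D0 c1 n0).
apply: (lip_le_near_lipschitz (f := f)) => //.
- by rewrite addr_ge0 ?mulr_ge0 ?divr_ge0 // ltW.
- by move=> x y /XP[xl _] /XP[yl _]; apply: lattice_sep.
- move=> x xX; rewrite -[x]/(val [` xX]%fset) gE.
  by have := hN [` xX]%fset; rewrite /nearby inE.
- by move=> x y /X_cube cx /X_cube cy; apply: lip_le.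
Qed.
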